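(* Let $n=2k$ with $k\ge 2$. If $lmd(S_n)=2$, then no local metric basis of $S_n$ has both of its vertices in the same cycle $C_i$, $i\in\{a,b,c,d\}$.
   Context: For $n\ge 3$, $S_n$ is the graph with vertex set $\{a_i,b_i,c_i,d_i : 1\le i\le n\}$ and edge set $\{a_ia_{i+1}, b_ib_{i+1}, c_ic_{i+1}, d_id_{i+1}, a_{i+1}b_i, a_ib_i, b_ic_i, c_id_i : 1\le i\le n\}$, indices taken modulo $n$. For $i\in\{a,b,c,d\}$, $C_i$ is the cycle induced by $i_1,\ldots,i_n$. A vertex $w$ resolves $u,v$ if $d(u,w)\neq d(v,w)$ ($d$ the graph distance). A local resolving set is a vertex set $W$ such that every two adjacent vertices are resolved by some element of $W$; a local metric basis is a local resolving set of minimum cardinality, and $lmd(G)$ is that cardinality. *)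

From mathcomp Require Import all_boot.
Set Implicit Arguments. Unset Strict Implicit. Unset Printing Implicit Defensive.

Section Graph.
Variables (T : finType) (e : rel T).

Fixpoint ball (u : T) (m : nat) : {set T} :=
  if m is m'.+1 then ball u m' :|: [set y | [exists x in ball u m', e x y]]
  else [set u].

(* graph distance: least m with v in ball u m (any finite distance is < #|T|;
   #|T| is returned for unreachable vertices, which does not occur for S_n) *)
Definition gdist (u v : T) : nat := find (fun m => v \in ball u m) (iota 0 #|T|).

Definition resolves (w u v : T) : bool := gdist u w != gdist v w.

Definition local_resolving (W : {set T}) : bool :=
  [forall u, forall v, e u v ==> [exists w in W, resolves w u v]].

(* local metric dimension: minimum cardinality of a local resolving set
   ([set: T] is always local resolving, so the arg min is well defined) *)
Definition lmd : nat :=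
  #|[arg min_(W < [set: T] | local_resolving W) #|W|]|.

Definition local_metric_basis (W : {set T}) : bool :=
  local_resolving W && (#|W| == lmd).

End Graph.

(* The graph S_n: vertex (l, i) with l : 'I_4 (0 = a, 1 = b, 2 = c, 3 = d), i : 'I_n
   (vertex l_{i+1} in the paper's 1-based indexing). *)
Definition Svert (n : nat) := ('I_4 * 'I_n)%type.

Definition S_edge0 (n : nat) (x y : Svert n) : bool :=
  [|| (x.1 == y.1) && (val y.2 == (val x.2 + 1) %% n)
    , [&& val x.1 == 0, val y.1 == 1 & val x.2 == (val y.2 + 1) %% n]
    , [&& val x.1 == 0, val y.1 == 1 & val x.2 == val y.2]
    , [&& val x.1 == 1, val y.1 == 2 & val x.2 == val y.2]
    | [&& val x.1 == 2, val y.1 == 3 & val x.2 == val y.2] ].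

Definition S_adj (n : nat) : rel (Svert n) := fun x y => S_edge0 x y || S_edge0 y x.

Definition Scycle (n : nat) (l : 'I_4) : {set Svert n} := [set x | x.1 == l].

From mathcomp Require Import all_boot zify.
Set Implicit Arguments. Unset Strict Implicit. Unset Printing Implicit Defensive.

(** Place a_0, b_0, a_1, b_1, ... around a cycle of length 2n, so that a_i sits at
    position 2i and b_i, c_i, d_i at position 2i+1.  The distance in S_n from
    (l, i) to (l', i') is then |l - l'| plus half (rounded down) the cyclic
    distance of their positions: this function vanishes only on the diagonal,
    grows by at most one along an edge, and decreases along some edge out of
    every other vertex, so it is the graph distance.  With this formula at hand,
    for two distinct vertices w, w' of one cycle an explicit edge next to w is
    equidistant from both; which edge depends on whether w' lies less than,
    more than, or exactly half-way around the cycle from w, and the last case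
    only exists because n is even. *)

Lemma find_leq_iota d a N : a <= d < a + N -> find (leq d) (iota a N) = d - a.
Proof.
elim: N a => [|N IH] a /=; first lia.
by move=> hd; case: leqP => hh; [lia | rewrite IH; lia].
Qed.

Section PotentialDistance.
Variables (T : finType) (e : rel T) (c : T) (h : T -> nat).
Hypotheses (h_c : h c = 0) (h_eq0 : forall y, h y = 0 -> y = c)
  (h_edge : forall x y, e x y -> h y <= (h x).+1)
  (h_desc : forall y, 0 < h y -> exists2 x, e x y & h x = (h y).-1).

Lemma ball_potential m y : (y \in ball e c m) = (h y <= m).
Proof.
elim: m y => [|m IH] y /=.
  by rewrite in_set1 leqn0; apply/eqP/eqP => [->|] //; apply: h_eq0.
rewrite in_setU in_set IH; apply/orP/idP => [[|/existsP[x /andP[]]]|hy].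
- exact: leqW.
- by rewrite IH => hx /h_edge; lia.
- have [//|hm] := leqP (h y) m; first by left.
  right; have [x exy hx] := h_desc (leq_ltn_trans (leq0n m) hm).
  by apply/existsP; exists x; rewrite exy andbT IH hx; lia.
Qed.

Lemma gdist_potential y : h y < #|T| -> gdist e c y = h y.
Proof.
move=> hy; rewrite /gdist (eq_find (a2 := leq (h y))) => [|m].
  by rewrite find_leq_iota //; lia.
by rewrite ball_potential.
Qed.

End PotentialDistance.

Definition natdist (X Y : nat) := (X - Y) + (Y - X).
Definition cycdist (N X Y : nat) := minn (natdist X Y) (N - natdist X Y).

Section CycleDistance.
Variable N : nat.
Local Notation cd := (cycdist N).

Lemma cycdist_le X Y : 2 * cd X Y <= N.
Proof. rewrite /cycdist /natdist; lia. Qed.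

Lemma cycdist_eq0 X Y : X < N -> Y < N -> (cd X Y == 0) = (X == Y).
Proof. rewrite /cycdist /natdist; lia. Qed.

Lemma cycdist_triangle X Y Z : X < N -> Y < N -> Z < N -> cd X Z <= cd X Y + cd Y Z.
Proof. rewrite /cycdist /natdist; lia. Qed.

Definition cycdist_spec X Y d :=
  (X + d = Y \/ d + Y = N + X \/ Y + d = X \/ d + X = N + Y) /\ 2 * d <= N.

Lemma cycdistP X Y : X < N -> Y < N -> cycdist_spec X Y (cd X Y).
Proof. rewrite /cycdist_spec /cycdist /natdist; lia. Qed.

Definition cycstep s Y Y' := [/\ Y < N, Y' < N & Y' = Y + s \/ Y' + N = Y + s].

Lemma cycdist_step C Y Y1 Y2 s : C < N -> s <= cd C Y ->
  cycstep s Y Y1 -> cycstep s Y2 Y -> cd C Y1 = cd C Y - s \/ cd C Y2 = cd C Y - s.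
Proof.
move=> hC hs [hY hY1 e1] [hY2 _ e2]; have hle := cycdist_le C Y.
have := cycdistP hC hY; have := cycdistP hC hY1; have := cycdistP hC hY2.
rewrite /cycdist_spec; move: (cd C Y) (cd C Y1) (cd C Y2) hs hle => a b d *; lia.
Qed.

End CycleDistance.

Lemma cycdist_mod2 m X Y : X < 2 * m -> Y < 2 * m -> cycdist (2 * m) X Y = X + Y %[mod 2].
Proof. rewrite /cycdist /natdist => *; lia. Qed.

Section SGraph.
Variable n : nat.
Hypothesis n_ge3 : 3 <= n.

Definition Spos (l i : nat) := 2 * i + minn 1 l.
Definition Sdist (l1 i1 l2 i2 : nat) :=
  natdist l1 l2 + cycdist (2 * n) (Spos l1 i1) (Spos l2 i2) %/ 2.

Definition Snext (i j : nat) := j = i + 1 \/ i + 1 = n /\ j = 0.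

Definition Sedge0 (lx ix ly iy : nat) :=
  lx = ly /\ Snext ix iy \/ lx = 0 /\ ly = 1 /\ Snext iy ix \/
  lx = 0 /\ ly = 1 /\ ix = iy \/ lx = 1 /\ ly = 2 /\ ix = iy \/ lx = 2 /\ ly = 3 /\ ix = iy.
Definition Sedge lx ix ly iy := Sedge0 lx ix ly iy \/ Sedge0 ly iy lx ix.

Lemma Snext_succ i : i < n -> exists2 j, j < n & Snext i j.
Proof. by move=> hi; case: (ltnP i.+1 n) => h; [exists i.+1 | exists 0]; rewrite /Snext; lia. Qed.

Lemma Snext_pred j : j < n -> exists2 i, i < n & Snext i j.
Proof. by move=> hj; case: (posnP j) => h; [exists n.-1 | exists j.-1]; rewrite /Snext; lia. Qed.

Lemma S_adjP (x y : Svert n) : S_adj x y <-> Sedge x.1 x.2 y.1 y.2.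
Proof.
have succ_mod i : i < n -> (i + 1) %% n = if i + 1 == n then 0 else i + 1.
  move=> hi; case: eqP => [->|ne]; first by rewrite modnn.
  by rewrite modn_small //; lia.
rewrite /S_adj /S_edge0 -![_.1 == _.1]val_eqE !succ_mod ?ltn_ord //.
case: x y => [[lx hlx] [ix hix]] [[ly hly] [iy hiy]] /=.
rewrite /Sedge /Sedge0 /Snext.
have : lx = 0 \/ lx = 1 \/ lx = 2 \/ lx = 3 by lia.
have : ly = 0 \/ ly = 1 \/ ly = 2 \/ ly = 3 by lia.
case=> [->|[->|[->|->]]]; case=> [->|[->|[->|->]]] /=;
  repeat case: ifP => /eqP ?; split => H; lia.
Qed.

Lemma Spos_lt l i : i < n -> Spos l i < 2 * n.
Proof. rewrite /Spos; lia. Qed.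

Lemma Sdist_eq0 l1 i1 l2 i2 : i1 < n -> i2 < n ->
  (Sdist l1 i1 l2 i2 == 0) = (l1 == l2) && (i1 == i2).
Proof.
move=> h1 h2; rewrite /Sdist; have := cycdistP (Spos_lt l1 h1) (Spos_lt l2 h2).
move: (cycdist _ _ _) => d; rewrite /cycdist_spec /Spos /natdist; lia.
Qed.

Lemma Sdist_lt l1 i1 l2 i2 : l1 < 4 -> l2 < 4 -> Sdist l1 i1 l2 i2 < 4 * n.
Proof. rewrite /Sdist /natdist => *; have := cycdist_le (2 * n) (Spos l1 i1) (Spos l2 i2); lia. Qed.

Lemma Sedge_Spos lx ix ly iy : ix < n -> iy < n -> Sedge lx ix ly iy ->
  lx = ly /\ cycdist (2 * n) (Spos lx ix) (Spos ly iy) <= 2 \/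
  natdist lx ly = 1 /\ cycdist (2 * n) (Spos lx ix) (Spos ly iy) <= 1 /\
    (lx = 0 \/ ly = 0 \/ Spos lx ix = Spos ly iy).
Proof. rewrite /Sedge /Sedge0 /Snext /cycdist /natdist /Spos; lia. Qed.

Lemma Sdist_edge lc ic lx ix ly iy : ic < n -> ix < n -> iy < n ->
  Sedge lx ix ly iy -> Sdist lc ic ly iy <= (Sdist lc ic lx ix).+1.
Proof.
move=> hc hx hy /(Sedge_Spos hx hy); rewrite /Sdist.
have := cycdist_triangle (Spos_lt lc hc) (Spos_lt lx hx) (Spos_lt ly hy).
have := cycdist_mod2 (Spos_lt lc hc) (Spos_lt lx hx).
have := cycdist_mod2 (Spos_lt lc hc) (Spos_lt ly hy).
move: (cycdist (2 * n) (Spos lc ic) (Spos ly iy)) (cycdist (2 * n) (Spos lc ic) (Spos lx ix))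
  (cycdist (2 * n) (Spos lx ix) (Spos ly iy)) => dy dx dxy.
rewrite /Spos /natdist; lia.
Qed.

Lemma Spos_zig i : i < n -> cycstep (2 * n) 1 (Spos 0 i) (Spos 1 i).
Proof. by rewrite /cycstep /Spos => *; split; lia. Qed.

Lemma Spos_zag i j : i < n -> j < n -> Snext i j -> cycstep (2 * n) 1 (Spos 1 i) (Spos 0 j).
Proof. by rewrite /cycstep /Snext /Spos => *; split; lia. Qed.

Lemma Spos_next l i j : i < n -> j < n -> Snext i j -> cycstep (2 * n) 2 (Spos l i) (Spos l j).
Proof. by rewrite /cycstep /Snext /Spos => *; split; lia. Qed.

Definition closer_neighbour lc ic ly iy := exists lx ix,
  [/\ lx < 4, ix < n, Sedge lx ix ly iy & Sdist lc ic lx ix = (Sdist lc ic ly iy).-1].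

Lemma Sedge_sym lx ix ly iy : Sedge lx ix ly iy -> Sedge ly iy lx ix.
Proof. by rewrite /Sedge; case; [right|left]. Qed.

Lemma Sedge_vertical l i : 0 < l < 3 -> Sedge l i l.+1 i.
Proof. by rewrite /Sedge /Sedge0; lia. Qed.

Lemma Sedge_cycle l i j : Snext i j -> Sedge l i l j.
Proof. by left; left. Qed.

Lemma Sedge_zig i : Sedge 0 i 1 i.
Proof. by left; right; right; left. Qed.

Lemma Sedge_zag i j : Snext i j -> Sedge 1 i 0 j.
Proof. by right; right; left. Qed.

Lemma closer_neighbour_vertical lc ic ly iy : lc < 4 -> ly < 4 -> iy < n ->
  0 < ly /\ ly < lc \/ 1 < ly /\ lc < ly -> closer_neighbour lc ic ly iy.
Proof.
move=> hlc hly hiy [hlt|hgt].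
- exists ly.+1, iy; rewrite /Sdist.
  have -> : Spos ly.+1 iy = Spos ly iy by rewrite /Spos; lia.
  split; rewrite ?/natdist //; try lia.
  by apply: Sedge_sym; apply: Sedge_vertical; lia.
- exists ly.-1, iy; rewrite /Sdist.
  have -> : Spos ly.-1 iy = Spos ly iy by rewrite /Spos; lia.
  split; rewrite ?/natdist //; try lia.
  have e : ly = ly.-1.+1 by lia.
  by rewrite {2}e; apply: Sedge_vertical; lia.
Qed.

Lemma closer_neighbour_zigzag lc ic ly iy : lc < 4 -> ic < n -> iy < n ->
  ly = 0 /\ 0 < lc \/ ly = 1 /\ lc = 0 -> closer_neighbour lc ic ly iy.
Proof.
move=> hlc hic hiy hl.
have hC := Spos_lt lc hic; have hY := Spos_lt ly hiy.
have odd_d : cycdist (2 * n) (Spos lc ic) (Spos ly iy) = 1 %[mod 2].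
  by rewrite cycdist_mod2 //; rewrite /Spos; lia.
have pos_d : 1 <= cycdist (2 * n) (Spos lc ic) (Spos ly iy) by move: odd_d; case: cycdist.
have [ipred hipred hpi] := Snext_pred hiy; have [isucc hisucc hsi] := Snext_succ hiy.
case: hl => [[ly0 lc_pos]|[ly1 lc0]]; subst ly.
- have [h1|h2] := cycdist_step hC pos_d (Spos_zig hiy) (Spos_zag hipred hiy hpi).
  + exists 1, iy; split; rewrite /Sdist ?h1 //; last by move: odd_d; rewrite /natdist; lia.
    exact/Sedge_sym/Sedge_zig.
  + exists 1, ipred; split; rewrite /Sdist ?h2 //; last by move: odd_d; rewrite /natdist; lia.
    exact: Sedge_zag.
- have [h1|h2] := cycdist_step hC pos_d (Spos_zag hiy hisucc hsi) (Spos_zig hiy).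
  + exists 0, isucc; split; rewrite /Sdist ?h1 //; last by move: odd_d; rewrite /natdist; lia.
    exact/Sedge_sym/Sedge_zag.
  + exists 0, iy; split; rewrite /Sdist ?h2 //; last by move: odd_d; rewrite /natdist; lia.
    exact: Sedge_zig.
Qed.

Lemma closer_neighbour_cycle l ic iy : l < 4 -> ic < n -> iy < n -> ic != iy ->
  closer_neighbour l ic l iy.
Proof.
move=> hl hic hiy hne.
have hC := Spos_lt l hic; have hY := Spos_lt l hiy.
have even_d : cycdist (2 * n) (Spos l ic) (Spos l iy) = 0 %[mod 2].
  by rewrite cycdist_mod2 //; rewrite /Spos; lia.
have pos_d : 0 < cycdist (2 * n) (Spos l ic) (Spos l iy).
  by rewrite lt0n cycdist_eq0 //; move: hne; rewrite /Spos; lia.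
have ge2_d : 2 <= cycdist (2 * n) (Spos l ic) (Spos l iy) by move: even_d pos_d; lia.
have [ipred hipred hpi] := Snext_pred hiy; have [isucc hisucc hsi] := Snext_succ hiy.
have [h1|h2] := cycdist_step hC ge2_d (Spos_next l hiy hisucc hsi) (Spos_next l hipred hiy hpi).
- exists l, isucc; split; rewrite /Sdist ?h1 //; last by move: even_d; rewrite /natdist; lia.
  exact/Sedge_sym/Sedge_cycle.
- exists l, ipred; split; rewrite /Sdist ?h2 //; last by move: even_d; rewrite /natdist; lia.
  exact: Sedge_cycle.
Qed.

Lemma Sdist_descent lc ic ly iy : lc < 4 -> ly < 4 -> ic < n -> iy < n ->
  (lc != ly) || (ic != iy) -> closer_neighbour lc ic ly iy.
Proof.
move=> hlc hly hic hiy hne.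
have [lt|gt|eq] := ltngtP ly lc.
- case: (posnP ly) => [ly0|ly_pos].
  + by apply: closer_neighbour_zigzag => //; lia.
  + by apply: closer_neighbour_vertical => //; lia.
- case: (ltnP 1 ly) => [ly_gt1|ly_le1].
  + by apply: closer_neighbour_vertical => //; lia.
  + by apply: closer_neighbour_zigzag => //; lia.
- by subst ly; apply: closer_neighbour_cycle; rewrite // eqxx in hne.
Qed.

Lemma gdist_S (c y : Svert n) : gdist (@S_adj n) c y = Sdist c.1 c.2 y.1 y.2.
Proof.
apply: (gdist_potential (h := fun y : Svert n => Sdist c.1 c.2 y.1 y.2)).
- by apply/eqP; rewrite Sdist_eq0 ?ltn_ord // !eqxx.
- move=> z /eqP; rewrite Sdist_eq0 ?ltn_ord // => /andP[/eqP e1 /eqP e2].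
  by case: c z e1 e2 => [c1 c2] [z1 z2] /= /val_inj -> /val_inj ->.
- by move=> u v /S_adjP; apply: Sdist_edge; apply: ltn_ord.
- move=> z; rewrite lt0n Sdist_eq0 ?ltn_ord // negb_and => hne.
  have [lx [ix [hlx hix he hd]]] :=
    Sdist_descent (ltn_ord c.1) (ltn_ord z.1) (ltn_ord c.2) (ltn_ord z.2) hne.
  by exists (Ordinal hlx, Ordinal hix); first exact/S_adjP.
- by rewrite card_prod !card_ord Sdist_lt.
Qed.

Lemma Sdist_eq_intro lu iu lv iv l p : iu < n -> iv < n -> p < n ->
  (forall du dv, cycdist_spec (2 * n) (Spos lu iu) (Spos l p) du ->
     cycdist_spec (2 * n) (Spos lv iv) (Spos l p) dv ->
     natdist lu l + du %/ 2 = natdist lv l + dv %/ 2) ->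
  Sdist lu iu l p = Sdist lv iv l p.
Proof. by move=> hu hv hp; apply; apply: cycdistP; apply: Spos_lt. Qed.

Lemma equidistant_edge l p q : ~~ odd n -> l < 4 -> p < q -> q < n ->
  exists lu iu lv iv, [/\ lu < 4, iu < n, lv < 4 & iv < n] /\
    [/\ Sedge lu iu lv iv, Sdist lu iu l p = Sdist lv iv l p & Sdist lu iu l q = Sdist lv iv l q].
Proof.
move=> /negbTE n_even hl hpq hq; have hp : p < n by lia.
have n2 : n %% 2 = 0 by rewrite modn2 n_even.
have [ipred hipred hpi] := Snext_pred hp; have [isucc hisucc hsi] := Snext_succ hp.
have [lt|gt|eq] := ltngtP (2 * (q - p)) n; case: (posnP l) => [l0|l_pos];
  [ exists 1, ipred, 0, ipred | exists 0, p, 1, ipred | exists 1, p, 0, isucc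
  | exists 0, isucc, 1, isucc | exists 1, ipred, 1, p | exists 0, p, 0, isucc ];
  split => //; split; try (apply: Sdist_eq_intro => // du dv;
    move: hpi hsi; rewrite /Snext /cycdist_spec /Spos /natdist; lia).
- exact: Sedge_sym (Sedge_zig _).
- exact: Sedge_sym (Sedge_zag hpi).
- exact: Sedge_zag hsi.
- exact: Sedge_zig.
- exact: Sedge_cycle hpi.
- exact: Sedge_cycle hsi.
Qed.

Lemma same_cycle_pair_not_local_resolving (w1 w2 : Svert n) :
  ~~ odd n -> w1.1 = w2.1 -> w1 != w2 -> ~~ local_resolving (@S_adj n) [set w1; w2].
Proof.
move=> n_even; wlog lt12 : w1 w2 / w1.2 < w2.2 => [wlog_lt|] same_l ne12.
  have [lt|gt|eq] := ltngtP w1.2 w2.2; first exact: wlog_lt.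
    by rewrite setUC; apply: wlog_lt; rewrite // eq_sym.
  by case: w1 w2 same_l eq ne12 {wlog_lt} => [l1 i1] [l2 i2] /= -> /val_inj ->; rewrite eqxx.
have [lu [iu [lv [iv [[hlu hiu hlv hiv] [huv eq1 eq2]]]]]] :=
  equidistant_edge n_even (ltn_ord w1.1) lt12 (ltn_ord w2.2).
pose u : Svert n := (Ordinal hlu, Ordinal hiu); pose v : Svert n := (Ordinal hlv, Ordinal hiv).
have adj_uv : S_adj u v by apply/S_adjP.
apply/forallP => /(_ u)/forallP/(_ v); rewrite adj_uv => /existsP[w].
rewrite !inE /resolves !gdist_S => /andP[/orP[] /eqP-> /=].
- by rewrite eq1 eqxx.
- by rewrite -same_l eq2 eqxx.
Qed.

End SGraph.

Theorem lemma3p3 (k : nat) (hk : 2 <= k) :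
  lmd (@S_adj (2 * k)) = 2 ->
  forall W : {set Svert (2 * k)}, local_metric_basis (@S_adj (2 * k)) W ->
  ~ (exists l : 'I_4, W \subset Scycle (2 * k) l).
Proof.
move=> lmd2 W /andP[W_res]; rewrite lmd2 => /cards2P[w1 [w2 [ne12 W12]]] [l W_l].
have in_l w : w \in W -> w.1 = l by move/(subsetP W_l); rewrite inE => /eqP.
have same_l : w1.1 = w2.1 by rewrite !in_l // W12 !inE eqxx ?orbT.
have n_ge3 : 3 <= 2 * k by lia.
have n_even : ~~ odd (2 * k) by rewrite oddM.
move: W_res; rewrite W12.
by apply/negP: (same_cycle_pair_not_local_resolving n_ge3 n_even same_l ne12).
Qed.
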